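(* Let $n\ge 2$ and let $NF_n$ be the complex Leibniz algebra with basis $\{e_1,\dots,e_n\}$ and nonzero products $[e_i,e_1]=e_{i+1}$, $1\le i\le n-1$. A pair $(d,D)$ of linear maps of $NF_n$ is a biderivation if and only if there exist $\alpha_1,\dots,\alpha_n,\beta_2,\dots,\beta_n\in\mathbb C$ such that $$d(e_i)=i\alpha_1e_i+\sum_{j=i+1}^n\alpha_{j-i+1}e_j\ (1\le i\le n),\qquad D(e_1)=\alpha_1e_1+\sum_{j=2}^n\beta_je_j,\qquad D(e_i)=0\ (2\le i\le n).$$
   Context: All algebras are over $\mathbb C$. A (right) Leibniz algebra is a vector space $L$ with bilinear bracket satisfying $[x,[y,z]]=[[x,y],z]-[[x,z],y]$. Unlisted products of basis elements are zero. A derivation is a linear map $d$ with $d([x,y])=[d(x),y]+[x,d(y)]$; an anti-derivation is a linear map $D$ with $D([x,y])=[D(x),y]-[D(y),x]$. A biderivation of $L$ is a pair $(d,D)$ with $d$ a derivation, $D$ an anti-derivation, and $[x,d(y)]=[x,D(y)]$ for all $x,y\in L$. *)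

From HB Require Import structures.
From mathcomp Require Import all_boot all_order all_algebra.
From mathcomp Require Import complex.
From mathcomp Require Import Rstruct.
From Stdlib Require Rdefinitions.
Set Implicit Arguments. Unset Strict Implicit. Unset Printing Implicit Defensive.
Import Order.TTheory GRing.Theory Num.Theory.
Local Open Scope ring_scope.

Definition CC : fieldType := Rdefinitions.R[i].

Section Generic.
Variables (F : fieldType) (V : lmodType F) (br : V -> V -> V).

Definition is_derivation (d : V -> V) : Prop :=
  forall x y, d (br x y) = br (d x) y + br x (d y).

Definition is_antiderivation (D : V -> V) : Prop :=
  forall x y, D (br x y) = br (D x) y - br (D y) x.

Definition is_biderivation (d D : V -> V) : Prop :=
  [/\ is_derivation d, is_antiderivation D & forall x y, br x (d y) = br x (D y)].
End Generic.

(* The underlying space of NF_n is CC^n, as row vectors; basis e_1..e_n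
   (1-based: e k has a 1 in column k-1). *)
Definition e (n k : nat) : 'rV[CC]_n := \row_(j < n) (j.+1 == k)%:R.

(* Bracket of NF_n: bilinear extension of [e_i, e_1] = e_{i+1} (1 <= i <= n-1),
   all other products of basis elements zero.  Coordinates x 0 j are the
   coefficient of e_{j+1}. *)
Definition NFbr (n : nat) (x y : 'rV[CC]_n) : 'rV[CC]_n :=
  \sum_(i < n) \sum_(j < n)
     (x 0 i * y 0 j) *: (if ((j.+1 == 1)%N && (i.+1 <= n - 1)%N) then e n i.+2 else 0).

From HB Require Import structures.
From mathcomp Require Import all_boot all_order all_algebra.
Import GRing.Theory.
Local Open Scope ring_scope.
Set Implicit Arguments. Unset Strict Implicit.

(* Every bracket of NF_n has the form [x, y] = y_1 s(x), where s is right
   multiplication by e_1, the shift e_i |-> e_(i+1).  For brackets of this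
   shape, (d, D) is a biderivation iff d s = s d + a s with a the e_1-coordinate
   of d(e_1), D s = 0, and d(e_1), D(e_1) have the same e_1-coordinate.  The
   first condition gives d(e_(i+1)) = s(d(e_i)) + a e_(i+1), which unrolls into
   the stated triangular form of d; the second says that D vanishes on the
   image e_2, ..., e_n of s, so only D(e_1) is free. *)

Section RankOneBracket.
Variables (F : fieldType) (V : lmodType F).
Variables (phi : {scalar V}) (s : {linear V -> V}) (u : V).
Variable br : V -> V -> V.
Hypothesis brE : forall x y, br x y = phi y *: s x.
Hypotheses (phi_u : phi u = 1) (phi_s : forall x, phi (s x) = 0).
Hypothesis decomp : forall x, exists z, x = phi x *: u + s z.

Lemma derivation_comm_rmul (d : V -> V) :
  is_derivation br d -> forall x, d (s x) = s (d x) + phi (d u) *: s x.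
Proof. by move=> dd x; have := dd x u; rewrite !brE phi_u !scale1r. Qed.

Lemma antiderivation_rmul_eq0 (D : {linear V -> V}) :
  is_antiderivation br D -> forall x, D (s x) = 0.
Proof.
move=> dD x.
have sD_ker y : phi y = 0 -> s (D y) = 0.
  move=> phiy0; have := dD u y.
  rewrite !brE phiy0 phi_u scale0r linear0 scale0r scale1r sub0r => /eqP.
  by rewrite eq_sym oppr_eq0 => /eqP.
have sDx : s (D x) = phi x *: s (D u).
  have := sD_ker (x - phi x *: u); rewrite !linearB !linearZ /= phi_u mulr1 subrr.
  by move=> /(_ erefl) /eqP; rewrite scalerN subr_eq0 => /eqP.
by have := dD x u; rewrite !brE phi_u !scale1r sDx subrr.
Qed.

Lemma phi_comm_rmul (d : {linear V -> V}) :
  (forall x, d (s x) = s (d x) + phi (d u) *: s x) ->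
  forall y, phi (d y) = phi y * phi (d u).
Proof.
move=> dcomm y; have [z ->] := decomp y.
by rewrite linearD linearZ dcomm /= !linearD !linearZ /= !phi_s phi_u mulr0 !addr0 mulr1.
Qed.

Lemma rmul_kernel_factor (D : {linear V -> V}) :
  (forall x, D (s x) = 0) -> forall y, D y = phi y *: D u.
Proof. by move=> Ds0 y; have [z {1}->] := decomp y; rewrite linearD linearZ Ds0 addr0. Qed.

Lemma is_biderivation_rmulP (d D : {linear V -> V}) (x0 : V) : s x0 != 0 ->
  is_biderivation br d D <->
  [/\ forall x, d (s x) = s (d x) + phi (d u) *: s x,
      forall x, D (s x) = 0 & phi (d u) = phi (D u)].
Proof.
move=> sx0; split.
  case=> dd dD dDd; split.
  - exact: derivation_comm_rmul.
  - exact: antiderivation_rmul_eq0.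
  have /eqP := dDd x0 u; rewrite !brE -subr_eq0 -scalerBl scaler_eq0 (negbTE sx0).
  by rewrite orbF subr_eq0 => /eqP.
case=> dcomm Ds0 phidD.
have phid := phi_comm_rmul dcomm; have Dy := rmul_kernel_factor Ds0.
split=> x y; rewrite !brE.
- by rewrite linearZ /= dcomm (phid y) scalerDr scalerA mulrC.
- by rewrite linearZ /= Ds0 scaler0 (Dy x) (Dy y) !linearZ /= !scalerA mulrC scalerN subrr.
- by rewrite (phid y) (Dy y) linearZ /= phidD.
Qed.
End RankOneBracket.

Section FiliformBasis.
Variable n : nat.
Local Notation V := 'rV[CC]_n.+1.
Local Notation e := (e n.+1).

(* The coefficient of e_j in x; meaningful only for 1 <= j <= n+1. *)
Definition ecoord (j : nat) (x : V) : CC := x 0 (inord j.-1).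

Fact ecoord_is_linear j : linear_for *%R (ecoord j).
Proof. by move=> a x y; rewrite /ecoord !mxE. Qed.

HB.instance Definition _ j :=
  GRing.isLinear.Build CC V CC *%R (ecoord j) (ecoord_is_linear j).

Definition shift (x : V) : V :=
  \row_(j < n.+1) if nat_of_ord j is j'.+1 then x 0 (inord j') else 0.

Fact shift_is_linear : linear shift.
Proof.
move=> a x y; apply/rowP => j; rewrite !mxE.
by case: (nat_of_ord j) => [|j']; rewrite ?mxE ?mulr0 ?addr0.
Qed.

HB.instance Definition _ := GRing.isLinear.Build CC V V *:%R shift shift_is_linear.

Lemma e_delta (i : 'I_n.+1) : e i.+1 = delta_mx 0 i.
Proof. by apply/rowP => j; rewrite !mxE eqSS. Qed.

Lemma e_out k : (n.+1 < k)%N -> e k = 0.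
Proof.
by move=> hk; apply/rowP => j; rewrite !mxE ltn_eqF // (leq_ltn_trans (ltn_ord j) hk).
Qed.

Lemma ecoord_e j k : (1 <= j <= n.+1)%N -> ecoord j (e k) = (j == k)%:R.
Proof. by case: j => // j /andP[_ hj]; rewrite /ecoord mxE /= (inordK hj). Qed.

Lemma ecoord1E x : ecoord 1 x = x 0 ord0.
Proof. by congr (x 0 _); apply/val_inj; rewrite /= inordK. Qed.

Lemma row_sum_e (x : V) : x = \sum_(1 <= j < n.+2) ecoord j x *: e j.
Proof.
rewrite {1}(row_sum_delta x) big_add1 /= big_mkord.
by apply: eq_bigr => i _; rewrite e_delta /ecoord inord_val.
Qed.

Lemma row_sum_e1 (x : V) :
  x = ecoord 1 x *: e 1 + \sum_(2 <= j < n.+2) ecoord j x *: e j.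
Proof. by rewrite {1}(row_sum_e x) big_ltn. Qed.

Lemma ecoord1_sum a (F : nat -> CC) :
  ecoord 1 (a *: e 1 + \sum_(2 <= j < n.+2) F j *: e j) = a.
Proof.
rewrite ecoord1E !mxE summxE big_nat_cond big1 ?addr0; first by rewrite mulr1.
by move=> j /andP[/andP[hj _] _]; rewrite !mxE (ltn_eqF hj) mulr0.
Qed.

Lemma eq_linear_e (f g : {linear V -> V}) :
  (forall i, (1 <= i <= n.+1)%N -> f (e i) = g (e i)) -> f =1 g.
Proof.
move=> fg x; rewrite (row_sum_e x) !linear_sum; apply: eq_big_nat => i hi.
by rewrite !linearZ fg.
Qed.

Lemma shift_e k : (1 <= k)%N -> shift (e k) = e k.+1.
Proof.
case: k => // k _; apply/rowP => j; rewrite !mxE.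
by case: j => [[|j] hj] //=; rewrite mxE (inordK (ltnW hj)).
Qed.

Lemma ecoord1_shift x : ecoord 1 (shift x) = 0.
Proof. by rewrite ecoord1E mxE. Qed.

Lemma NFbr_shift (x y : V) : NFbr x y = ecoord 1 y *: shift x.
Proof.
rewrite /NFbr {2}(row_sum_delta x) linear_sum scaler_sumr; apply: eq_bigr => i _.
rewrite big_ord_recl big1 ?addr0 => [|j _]; last by rewrite lift0 scaler0.
rewrite /= subn1 /= -e_delta linearZ /= shift_e // scalerA mulrC ecoord1E.
by case: ifP => // /negbT; rewrite -leqNgt => hi; rewrite e_out ?scaler0.
Qed.

Lemma row_decomp_shift (x : V) : exists z, x = ecoord 1 x *: e 1 + shift z.
Proof.
exists (\sum_(1 <= j < n.+1) ecoord j.+1 x *: e j).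
rewrite linear_sum {1}(row_sum_e1 x) big_add1 /=; apply: congr1.
by apply: eq_big_nat => j /andP[hj _]; rewrite linearZ /= shift_e.
Qed.

Lemma shift_e1_neq0 : (0 < n)%N -> shift (e 1) != 0.
Proof.
move=> n_gt0; rewrite shift_e //; apply/eqP => /rowP /(_ (inord 1)).
by rewrite !mxE (inordK (n_gt0 : 1 < n.+1)%N) => /eqP; rewrite oner_eq0.
Qed.

Lemma sum_e_widen (F : nat -> CC) m k : (n.+2 <= k)%N ->
  \sum_(m <= j < k) F j *: e j = \sum_(m <= j < n.+2) F j *: e j.
Proof.
move=> hk; rewrite [RHS](big_nat_widen _ _ k) // [RHS]big_mkcond /=.
by apply: eq_bigr => j _; case: ltnP => // hj; rewrite e_out ?scaler0.
Qed.

Definition dform (alpha : nat -> CC) (i : nat) : V :=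
  (i%:R * alpha 1%N) *: e i + \sum_(i.+1 <= j < n.+2) alpha (j - i + 1)%N *: e j.

Lemma shift_dform alpha i : (1 <= i)%N ->
  shift (dform alpha i) + alpha 1%N *: e i.+1 = dform alpha i.+1.
Proof.
move=> hi; rewrite /dform linearD linearZ /= shift_e // linear_sum /=.
have -> : \sum_(i.+1 <= j < n.+2) shift (alpha (j - i + 1)%N *: e j)
        = \sum_(i.+2 <= j < n.+2) alpha (j - i.+1 + 1)%N *: e j.
  rewrite -(@sum_e_widen _ _ n.+3) // [RHS]big_add1 /=.
  apply: eq_big_nat => j /andP[hj _].
  by rewrite linearZ /= shift_e ?subSS // (leq_trans _ hj).
by rewrite addrAC -scalerDl -natr1 mulrDl mul1r.
Qed.

Lemma dform_of_shift_comm (d : {linear V -> V}) :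
  (forall x, d (shift x) = shift (d x) + ecoord 1 (d (e 1)) *: shift x) ->
  forall i, (1 <= i <= n.+1)%N -> d (e i) = dform (ecoord^~ (d (e 1))) i.
Proof.
move=> dcomm; elim=> [//|i IH] /andP[_ hi]; case: i IH hi => [|i] IH hi.
  rewrite {1}(row_sum_e1 (d (e 1))) /dform mul1r; apply: congr1.
  by apply: eq_big_nat => j /andP[hj _]; rewrite subnK //; apply: ltnW.
by rewrite -shift_e // dcomm IH ?shift_e ?shift_dform //= ltnW.
Qed.

Lemma shift_comm_of_dform (d : {linear V -> V}) alpha :
  (forall i, (1 <= i <= n.+1)%N -> d (e i) = dform alpha i) ->
  forall x, d (shift x) = shift (d x) + alpha 1%N *: shift x.
Proof.
move=> hd; apply: (@eq_linear_e (d \o shift) (shift \o d \+ alpha 1%N \*: shift)).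
move=> i /andP[hi1 hin] /=; rewrite hd ?hi1 // shift_e // shift_dform //.
case: (ltnP i n.+1) => [hlt | hge]; first by rewrite hd.
have -> : i = n.+1 by apply/eqP; rewrite eqn_leq hin hge.
by rewrite /dform big_geq // addr0 e_out // linear0 scaler0.
Qed.

Lemma comp_shift_eq0 (D : {linear V -> V}) :
  (forall i, (2 <= i <= n.+1)%N -> D (e i) = 0) -> forall x, D (shift x) = 0.
Proof.
move=> hD0; apply: (@eq_linear_e (D \o shift) \0) => i /andP[hi1 hin].
rewrite /= shift_e //; case: (ltnP i n.+1) => [hlt | hge].
  by rewrite hD0 // ltnS hi1.
by rewrite e_out ?linear0 // ltnS.
Qed.

End FiliformBasis.

Theorem mainTheorem2 (n : nat) (hn : (2 <= n)%N)
    (d D : {linear 'rV[CC]_n -> 'rV[CC]_n}) :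
  is_biderivation (@NFbr n) d D <->
  exists (alpha beta : nat -> CC),
    [/\ (forall i : nat, (1 <= i <= n)%N ->
           d (e n i) = (i%:R * alpha 1%N) *: e n i
                       + \sum_(i.+1 <= j < n.+1) alpha (j - i + 1)%N *: e n j),
        D (e n 1) = alpha 1%N *: e n 1 + \sum_(2 <= j < n.+1) beta j *: e n j
      & (forall i : nat, (2 <= i <= n)%N -> D (e n i) = 0)].
Proof.
case: n hn d D => [|[|n]] // _ d D.
have ecoord1_e1 : ecoord 1 (e n.+2 1) = 1 by rewrite ecoord_e.
rewrite (is_biderivation_rmulP (@NFbr_shift n.+1) ecoord1_e1 (@ecoord1_shift n.+1)
           (@row_decomp_shift n.+1) d D (shift_e1_neq0 (ltn0Sn n))).
split=> [[dcomm Ds0 phidD] | [alpha [beta [hd hD1 hD0]]]].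
  exists (fun j => ecoord j (d (e n.+2 1))), (fun j => ecoord j (D (e n.+2 1))).
  split.
  - exact: dform_of_shift_comm.
  - by rewrite phidD; apply: row_sum_e1.
  - by move=> [|i] // /andP[hi _]; rewrite -shift_e // Ds0.
have phid1 : ecoord 1 (d (e n.+2 1)) = alpha 1%N.
  by rewrite hd // ecoord1_sum mul1r.
have phiD1 : ecoord 1 (D (e n.+2 1)) = alpha 1%N by rewrite hD1 ecoord1_sum.
have dcomm := shift_comm_of_dform hd; rewrite -phid1 in dcomm.
split; [exact: dcomm | exact: comp_shift_eq0 | exact: etrans phid1 (esym phiD1)].
Qed.
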